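(* Let $P\in(1,+\infty)$ and let $\mathcal{A}\subset\mathbb{N}^k$ be finite. Then $$\left(\sum_{\mathbf{a}\in\mathcal{A}}\frac{W_{k+1}^P(\mathbf{a})}{a_1\cdots a_k}\right)^{1/P}\left(\frac{1}{(\log2)^k}\sum_{\mathbf{a}\in\mathcal{A}}\frac{L^{(k+1)}(\mathbf{a})}{a_1\cdots a_k}\right)^{1-1/P}\ge\sum_{\mathbf{a}\in\mathcal{A}}\frac{\tau_{k+1}(\mathbf{a})}{a_1\cdots a_k}.$$
   Context: For $\mathbf{a}=(a_1,\dots,a_k)\in\mathbb{N}^k$: $\tau_{k+1}(\mathbf{a})=|\{(d_1,\dots,d_k)\in\mathbb{N}^k: d_1\cdots d_i\mid a_1\cdots a_i\ (1\le i\le k)\}|$; $L^{(k+1)}(\mathbf{a})$ is the $k$-dimensional Lebesgue measure of $\bigcup[\log(d_1/2),\log d_1)\times\cdots\times[\log(d_k/2),\log d_k)$ over all such $(d_1,\dots,d_k)$; and $$W_{k+1}^P(\mathbf{a})=\sum_{\substack{d_1\cdots d_i\mid a_1\cdots a_i\\1\le i\le k}}\left(\sum_{\substack{d_1'\cdots d_i'\mid a_1\cdots a_i\\|\log(d_i'/d_i)|<\log2\\1\le i\le k}}1\right)^{P-1},$$ where all $d_i,d_i'$ are positive integers. *)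

From HB Require Import structures.
From mathcomp Require Import all_boot all_order all_algebra.
From mathcomp Require Import finmap.
From mathcomp Require Import all_classical all_reals all_analysis.
Set Implicit Arguments. Unset Strict Implicit. Unset Printing Implicit Defensive.
Import Order.TTheory GRing.Theory Num.Theory.
Local Open Scope ring_scope.

Section Defs.
Variable R : realType.
Variable k : nat.

Definition prodA (a : k.-tuple nat) : nat := (\prod_(j < k) tnth a j)%N.

(* Each such d_i divides
   d_1...d_i | a_1...a_k (when all a_j > 0), so d_i <= prodA a and the
   enumeration range 'I_(prodA a).+1 loses no tuple. *)
Definition divtuples (a : k.-tuple nat) : {set {ffun 'I_k -> 'I_(prodA a).+1}} :=
  [set d : {ffun 'I_k -> 'I_(prodA a).+1} | [forall i : 'I_k, 0 < (d i : nat)]%N &&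
           [forall i : 'I_k, (\prod_(j < k | (j <= i)%N) (d j : nat))
                             %| (\prod_(j < k | (j <= i)%N) tnth a j)]%N].

Definition tau (a : k.-tuple nat) : nat := #|divtuples a|.

Definition Wk (P : R) (a : k.-tuple nat) : R :=
  \sum_(d in divtuples a)
    ((#|[set d' in divtuples a |
         [forall i : 'I_k,
            `| ln (((d' i : nat)%:R : R) / (d i : nat)%:R) | < ln 2]]|)%:R)
      `^ (P - 1).

(* Iterated one-dimensional Lebesgue integrals over R^n, points of R^n
   represented as sequences (first coordinate outermost). *)
Fixpoint iter_leb (n : nat) : (seq R -> \bar R) -> \bar R :=
  match n with
  | 0%N => fun f => f [::]
  | n.+1 => fun f =>
      (\int[@lebesgue_measure R]_(x in setT) iter_leb n (fun l => f (x :: l)))%E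
  end.

Definition boxunion (a : k.-tuple nat) : set (seq R) :=
  (fun l => exists2 d, d \in divtuples a &
     forall i : 'I_k, ln (((d i : nat)%:R : R) / 2) <= nth 0 l i
                      /\ nth 0 l i < ln ((d i : nat)%:R)).

Definition Lk (a : k.-tuple nat) : R :=
  fine (iter_leb k (fun l => (\1_(boxunion a) l : R)%:E)).

End Defs.

From HB Require Import structures.
From mathcomp Require Import all_boot all_order all_algebra.
From mathcomp Require Import finmap.
From mathcomp Require Import all_classical all_reals all_analysis.
From mathcomp Require Import ring lra.
Set Implicit Arguments. Unset Strict Implicit. Unset Printing Implicit Defensive.
Import Order.TTheory GRing.Theory Num.Theory.
Local Open Scope ring_scope.

(* For a fixed a, call two admissible tuples d, d' close when
   |log(d'_i/d_i)| < log 2 for every i, which happens exactly when their boxes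
   meet, and let N(d) count the tuples close to d, so that
   W(a) = sum_d N(d)^(P-1).  Hoelder's inequality with exponents P and
   P/(P-1), summed over all pairs (a, d) with weight 1/(a_1...a_k), gives
     sum 1 <= (sum N^(P-1))^(1/P) (sum 1/N)^(1-1/P).
   By the Caro-Wei bound the closeness graph on the tuples of a has a stable set
   of size at least sum_d 1/N(d); the boxes of a stable set are pairwise
   disjoint and each has volume (log 2)^k, whence
   (log 2)^k sum_d 1/N(d) <= L(a). *)

Section hoelder_sum.
Variable R : realType.

Lemma powR_divK (a Z r : R) : 0 <= a -> 0 <= Z -> 0 < r ->
  (a / Z `^ r^-1) `^ r = a `^ r / Z.
Proof.
move=> a0 Z0 r0.
rewrite powRM ?invr_ge0 ?powR_ge0 // -(powR_inv1 (powR_ge0 _ _)) -!powRrM.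
by rewrite mulN1r mulrN mulVf ?gt_eqF // powRN powRr1.
Qed.

Lemma hoelder_sum (I : eqType) (s : seq I) (x y : I -> R) (p q : R) :
  (forall i, 0 <= x i) -> (forall i, 0 <= y i) ->
  0 < p -> 0 < q -> p^-1 + q^-1 = 1 ->
  \sum_(i <- s) x i * y i <=
    (\sum_(i <- s) x i `^ p) `^ p^-1 * (\sum_(i <- s) y i `^ q) `^ q^-1.
Proof.
move=> x0 y0 p0 q0 pq.
set X := \sum_(i <- s) x i `^ p; set Y := \sum_(i <- s) y i `^ q.
have sum_powR_eq0 (z : I -> R) (r : R) : 0 < r -> \sum_(i <- s) z i `^ r = 0 ->
    forall i, i \in s -> z i = 0.
  move=> r0 sz0 i si; have /allP/(_ i si) : all (fun i => true ==> (z i `^ r == 0)) s.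
    by rewrite -psumr_eq0 ?sz0 // => j _; exact: powR_ge0.
  by rewrite /= powR_eq0 (gt_eqF r0) andbT => /eqP.
have [/(sum_powR_eq0 _ _ p0) x_eq0|X0] := eqVneq X 0.
  by rewrite big1_seq ?mulr_ge0 ?powR_ge0 // => i /andP[_ /x_eq0 ->]; rewrite mul0r.
have [/(sum_powR_eq0 _ _ q0) y_eq0|Y0] := eqVneq Y 0.
  by rewrite big1_seq ?mulr_ge0 ?powR_ge0 // => i /andP[_ /y_eq0 ->]; rewrite mulr0.
have Xpos : 0 < X by rewrite lt0r X0 sumr_ge0 // => i _; exact: powR_ge0.
have Ypos : 0 < Y by rewrite lt0r Y0 sumr_ge0 // => i _; exact: powR_ge0.
set A := X `^ p^-1; set B := Y `^ q^-1.
have young i : x i / A * (y i / B) <= x i `^ p / X / p + y i `^ q / Y / q.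
  rewrite -(powR_divK (x0 i) (ltW Xpos) p0) -(powR_divK (y0 i) (ltW Ypos) q0).
  by apply: conjugate_powR; rewrite ?divr_ge0 ?powR_ge0.
have : (\sum_(i <- s) x i * y i) / (A * B) <= 1.
  rewrite mulr_suml; under eq_bigr do rewrite invfM mulrACA.
  apply: le_trans (ler_sum _ (fun i _ => young i)) _.
  by rewrite big_split /= -!mulr_suml -/X -/Y !mulfV ?gt_eqF // !mul1r pq.
by rewrite ler_pdivrMr ?mulr_gt0 ?powR_gt0 // mul1r.
Qed.

Lemma hoelder_sum_split (I : eqType) (s : seq I) (w N : I -> R) (P : R) :
  1 < P -> (forall i, 0 <= w i) -> (forall i, i \in s -> 0 < N i) ->
  \sum_(i <- s) w i <=
    (\sum_(i <- s) w i * N i `^ (P - 1)) `^ P^-1 * (\sum_(i <- s) w i / N i) `^ (1 - P^-1).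
Proof.
move=> P1 w0 N0; have P0 : 0 < P by apply: lt_trans P1.
set t := 1 - P^-1; have t0 : 0 < t by rewrite subr_gt0 invf_lt1.
have Pt : P^-1 + t = 1 by rewrite addrC subrK.
have powK (Z r : R) : 0 < r -> 0 <= Z -> (Z `^ r^-1) `^ r = Z.
  by move=> r0 Z0; rewrite -powRrM mulVf ?gt_eqF // powRr1.
have wE i : i \in s -> (w i * N i `^ (P - 1)) `^ P^-1 * (w i / N i) `^ t = w i.
  move=> /N0 Ni0; rewrite !powRM ?powR_ge0 ?invr_ge0 ?(ltW Ni0) //.
  rewrite mulrACA -powRD Pt ?oner_eq0 // powRr1 //.
  rewrite -powRrM -(powR_inv1 (ltW Ni0)) -powRrM -powRD; last by rewrite (gt_eqF Ni0) implybT.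
  by rewrite mulrBl mulfV ?gt_eqF // mul1r mulN1r subrr powRr0 mulr1.
have xK i : ((w i * N i `^ (P - 1)) `^ P^-1) `^ P = w i * N i `^ (P - 1).
  by rewrite powK ?mulr_ge0 ?powR_ge0.
have yK i : i \in s -> ((w i / N i) `^ t) `^ t^-1 = w i / N i.
  by move=> /N0 Ni0; rewrite -{1}[t]invrK powK ?invr_gt0 ?divr_ge0 ?(ltW Ni0).
have := hoelder_sum s (x := fun i => (w i * N i `^ (P - 1)) `^ P^-1)
  (y := fun i => (w i / N i) `^ t) (q := t^-1) (fun i => powR_ge0 _ _) (fun i => powR_ge0 _ _) P0.
rewrite invr_gt0 !invrK => /(_ t0 Pt).
by rewrite (eq_big_seq _ wE) (eq_bigr _ (fun i _ => xK i)) (eq_big_seq _ yK).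
Qed.
End hoelder_sum.

Lemma lef_natV (R : numFieldType) (m n : nat) : (0 < m)%N -> (m <= n)%N ->
  (n%:R : R)^-1 <= (m%:R)^-1.
Proof.
move=> m0 mn; rewrite lef_pV2 ?posrE ?ltr0n ?ler_nat //.
exact: leq_trans mn.
Qed.

Section caro_wei.
Variables (T : finType) (r : rel T).
Hypotheses (r_sym : symmetric r) (r_refl : reflexive r).

Definition nbhd (S : {set T}) (x : T) : {set T} := [set y in S | r x y].

Definition stable (I : {set T}) : Prop :=
  forall x y, x \in I -> y \in I -> x != y -> ~~ r x y.

Lemma nbhd_gt0 (S : {set T}) (x : T) : x \in S -> (0 < #|nbhd S x|)%N.
Proof. by move=> xS; apply/card_gt0P; exists x; rewrite inE xS r_refl. Qed.

Lemma caro_wei (R : realFieldType) (S : {set T}) :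
  exists I : {set T}, [/\ I \subset S, stable I &
    \sum_(x in S) (#|nbhd S x|%:R)^-1 <= (#|I|%:R : R)].
Proof.
have [n] := ubnP #|S|; elim: n S => // n IH S ltS.
have [->|[x1 x1S]] := set_0Vmem S.
  by exists finset.set0; rewrite finset.sub0set big_set0 cards0; split=> // x y; rewrite finset.in_set0.
(* Greedy step: keep a vertex of minimal degree, delete its neighbourhood. *)
have [x0 x0S x0_min] : exists2 x0, x0 \in S & forall x, x \in S -> (#|nbhd S x0| <= #|nbhd S x|)%N.
  by exists [arg min_(x < x1 in S) #|nbhd S x|]; case: arg_minnP.
set U := nbhd S x0; set S' := S :\: U.
have x0U : x0 \in U by rewrite inE x0S r_refl.
have [|I' [I'S' I'stable I'sum]] := IH S'.
  rewrite -ltnS (leq_trans _ ltS) // ltnS (cardsD1 x0 S) x0S add1n ltnS subset_leq_card //.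
  apply/fintype.subsetP => y; rewrite !finset.inE => /andP[yU yS].
  by rewrite yS andbT; apply/eqP => yx0; move/negP: yU; apply; rewrite yx0 x0S r_refl.
have x0I' : x0 \notin I' by apply: contraL x0U => /(fintype.subsetP I'S'); rewrite inE => /andP[].
have x0_indep y : y \in I' -> ~~ r x0 y.
  move=> /(fintype.subsetP I'S'); rewrite /U !finset.inE.
  by case/andP=> yU yS; move: yU; rewrite yS.
exists (x0 |: I'); split.
- by rewrite finset.subUset finset.sub1set x0S (fintype.subset_trans I'S') ?finset.subsetDl.
- move=> x y; rewrite !in_setU1 => /predU1P[->|xI] /predU1P[->|yI]; rewrite ?eqxx // => xy.
  + exact: x0_indep.
  + by rewrite r_sym; apply: x0_indep.
  + exact: I'stable.
rewrite cardsU1 x0I' add1n -nat1r (bigID (mem U)) /=; apply: lerD.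
  have U_S x : x \in U -> x \in S by rewrite inE => /andP[].
  rewrite (eq_bigl (mem U)) => [|x]; last by rewrite andb_idl //; apply: U_S.
  apply: le_trans (_ : \sum_(x in U) (#|U|%:R : R)^-1 <= _).
    by apply: ler_sum => x /U_S xS; apply: lef_natV; [exact: nbhd_gt0 | exact: x0_min].
  by rewrite sumr_const -(mulr_natr (_^-1)) mulVf // pnatr_eq0 -lt0n nbhd_gt0.
apply: le_trans I'sum; rewrite (eq_bigl (mem S')) => [|x]; last by rewrite !inE andbC.
apply: ler_sum => x xS'; apply: lef_natV; first exact: nbhd_gt0.
by apply/subset_leq_card/fintype.subsetP => y; rewrite !inE => /andP[/andP[_ yS] ->]; rewrite yS.
Qed.
End caro_wei.

Section iter_leb_boxes.
Variable R : realType.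

Section monotone.
Local Open Scope ereal_scope.

Lemma ge0_le_integralT (f g : R -> \bar R) : (forall x, 0 <= f x) -> (forall x, f x <= g x) ->
  \int[@lebesgue_measure R]_(x in setT) f x <= \int[@lebesgue_measure R]_(x in setT) g x.
Proof.
move=> f0 fg; have g0 x : 0 <= g x by apply: le_trans (f0 x) (fg x).
rewrite !ge0_integralTE //=; apply: ereal_sup_le => _ [h hf <-]; exists h => //= x.
exact: le_trans (hf x) (fg x).
Qed.

Lemma iter_leb_ge0 n (f : seq R -> \bar R) : (forall l, 0 <= f l) -> 0 <= iter_leb n f.
Proof.
elim: n f => [|n IH] f f0 /=; first exact: f0.
by apply: integral_ge0 => x _; apply: IH.
Qed.

Lemma le_iter_leb n (f g : seq R -> \bar R) : (forall l, 0 <= f l) -> (forall l, f l <= g l) ->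
  iter_leb n f <= iter_leb n g.
Proof.
elim: n f g => [|n IH] f g f0 fg /=; first exact: fg.
by apply: ge0_le_integralT => x; [apply: iter_leb_ge0 | apply: IH].
Qed.

End monotone.

Definition in_box n (lo hi : 'I_n -> R) (l : seq R) : bool :=
  [forall j, lo j <= nth 0 l j < hi j].

Definition box_vol n (lo hi : 'I_n -> R) : R := \prod_(j < n) (hi j - lo j).

Lemma in_box_cons n (lo hi : 'I_n.+1 -> R) x l :
  in_box lo hi (x :: l) =
    (lo ord0 <= x < hi ord0) && in_box (lo \o lift ord0) (hi \o lift ord0) l.
Proof.
apply/forallP/andP => [H|[H0 /forallP H] j].
  by split; [exact: H ord0 | apply/forallP => j; exact: H (lift ord0 j)].
by case: (unliftP ord0 j) => [j' ->|->]; [exact: H j' | exact: H0].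
Qed.

Lemma box_vol_cons n (lo hi : 'I_n.+1 -> R) :
  box_vol lo hi = (hi ord0 - lo ord0) * box_vol (lo \o lift ord0) (hi \o lift ord0).
Proof. exact: big_ord_recl. Qed.

Lemma integral_sum_indic_itv (I : Type) (s : seq I) (c lo hi : I -> R) :
  (forall i, 0 <= c i) -> (forall i, lo i <= hi i) ->
  (\int[@lebesgue_measure R]_(x in setT)
     (\sum_(i <- s) (c i * \1_(`[lo i, hi i[%classic) x)%:E)%E)%E =
  (\sum_(i <- s) c i * (hi i - lo i))%:E.
Proof.
move=> c0 lohi; rewrite ge0_integral_sum //; last first.
- by move=> i x _; rewrite lee_fin mulr_ge0.
- by move=> i; apply/measurable_realfun.measurable_EFinP; apply: measurable_realfun.measurable_funM.
rewrite -sumEFin; apply: eq_bigr => i _.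
under eq_integral do rewrite EFinM.
rewrite ge0_integralZl_EFin //; last first.
  by apply/measurable_realfun.measurable_EFinP; exact: measurable_realfun.measurable_indic.
rewrite integral_indic // setIT EFinM.
have itv_len : lebesgue_measure (`[lo i, hi i[%classic : set R) = (hi i - lo i)%:E.
  by rewrite lebesgue_measure_itv /= lte_fin; case: ltgtP (lohi i) => // -> _; rewrite subrr.
by congr (_ * _)%E; exact: itv_len.
Qed.

Lemma iter_leb_sum_boxes n (I : Type) (s : seq I) (c : I -> R) (lo hi : I -> 'I_n -> R) :
  (forall i, 0 <= c i) -> (forall i j, lo i j <= hi i j) ->
  iter_leb n (fun l => (\sum_(i <- s) c i * (in_box (lo i) (hi i) l)%:R)%:E) =
  (\sum_(i <- s) c i * box_vol (lo i) (hi i))%:E.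
Proof.
elim: n I s c lo hi => [|n IH] I s c lo hi c0 lohi /=.
  congr EFin; apply: eq_bigr => i _.
  by rewrite /box_vol big_ord0 (_ : in_box _ _ _) ?mulr1 //; apply/forallP => -[].
pose lo' i := lo i \o lift ord0; pose hi' i := hi i \o lift ord0.
have vol_ge0 i : 0 <= box_vol (lo' i) (hi' i).
  by apply: prodr_ge0 => j _; rewrite subr_ge0 lohi.
have slice x : (fun l => (\sum_(i <- s) c i * (in_box (lo i) (hi i) (x :: l))%:R)%:E) =
    (fun l => (\sum_(i <- s) (c i * (lo i ord0 <= x < hi i ord0)%R%:R) *
                 (in_box (lo' i) (hi' i) l)%:R)%:E).
  apply: funext => l; congr EFin; apply: eq_bigr => i _.
  by rewrite in_box_cons -mulrA -natrM mulnb.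
transitivity (\int[@lebesgue_measure R]_(x in setT)
   (\sum_(i <- s) ((c i * box_vol (lo' i) (hi' i)) *
                   \1_(`[lo i ord0, hi i ord0[%classic) x)%:E)%E)%E.
  apply: eq_integral => x _; rewrite slice IH => [|i|i j]; last 2 first.
  - by rewrite mulr_ge0.
  - exact: lohi.
  by rewrite sumEFin; congr EFin; apply: eq_bigr => i _; rewrite indicE mem_setE in_itv /= mulrAC.
rewrite integral_sum_indic_itv => [|i|i]; last 2 first.
- by rewrite mulr_ge0.
- exact: lohi.
by congr EFin; apply: eq_bigr => i _; rewrite box_vol_cons mulrAC mulrA.
Qed.
End iter_leb_boxes.

Lemma ln2_gt0 (R : realType) : 0 < ln (2 : R).
Proof. by rewrite ln_gt0 // ltr1n. Qed.

Section divisor_boxes.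
Variables (R : realType) (k : nat) (a : k.-tuple nat).

Local Notation T := {ffun 'I_k -> 'I_(prodA a).+1}.

(* The neighbourhoods of [close] are exactly the sets counted in [Wk]. *)
Definition close (d d' : T) : bool :=
  [forall i, `|ln (((d' i : nat)%:R : R) / (d i : nat)%:R)| < ln 2].

Lemma close_sym : symmetric close.
Proof.
move=> d d'; apply: eq_forallb => i.
have [->|m0] := posnP (d i : nat); first by rewrite mul0r invr0 mulr0.
have [->|n0] := posnP (d' i : nat); first by rewrite mul0r invr0 mulr0.
by rewrite !ln_div ?posrE ?ltr0n // distrC.
Qed.

Lemma close_refl : reflexive close.
Proof.
move=> d; apply/forallP => i.
have [->|d0] := posnP (d i : nat); first by rewrite mul0r ln0 ?normr0 ?ln2_gt0.
by rewrite mulfV ?pnatr_eq0 -?lt0n // ln1 normr0 ln2_gt0.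
Qed.

Lemma divtuple_gt0 d i : d \in divtuples a -> (0 < (d i : nat))%N.
Proof. by rewrite inE => /andP[/forallP]. Qed.

Definition box_lo (d : T) (i : 'I_k) : R := ln ((d i : nat)%:R / 2).
Definition box_hi (d : T) (i : 'I_k) : R := ln (d i : nat)%:R.

Lemma box_lo_le_hi d i : box_lo d i <= box_hi d i.
Proof.
rewrite /box_lo /box_hi; have [->|d0] := posnP (d i : nat); first by rewrite mul0r.
by rewrite ler_ln ?posrE ?divr_gt0 ?ltr0n // ler_pdivrMr // ler_peMr // ler1n.
Qed.

Lemma box_lo_divtuple d i : d \in divtuples a -> box_lo d i = box_hi d i - ln 2.
Proof. by move=> /divtuple_gt0 d0; rewrite /box_lo ln_div ?posrE ?ltr0n ?d0. Qed.

Lemma box_vol_divtuple d : d \in divtuples a -> box_vol (box_lo d) (box_hi d) = ln 2 ^+ k.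
Proof.
move=> dS; rewrite /box_vol -[in RHS](card_ord k) -prodr_const.
by apply: eq_bigr => i _; rewrite box_lo_divtuple // opprB addrC subrK.
Qed.

Lemma boxunionE l :
  boxunion a l <-> exists2 d, d \in divtuples a & in_box (box_lo d) (box_hi d) l.
Proof.
split=> -[d dS H]; exists d => //; first by apply/forallP => i; have [-> ->] := H i.
by move=> i; have /andP[] := forallP H i.
Qed.

Lemma close_of_in_box d d' l : d \in divtuples a -> d' \in divtuples a ->
  in_box (box_lo d) (box_hi d) l -> in_box (box_lo d') (box_hi d') l -> close d d'.
Proof.
move=> dS d'S /forallP H /forallP H'; apply/forallP => i.
move: (H i) (H' i); rewrite !box_lo_divtuple // /box_hi => /andP[h1 h2] /andP[h3 h4].
rewrite ln_div ?posrE ?ltr0n ?divtuple_gt0 // ltr_norml; apply/andP; split; lra.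
Qed.

Lemma Lk_ge_stable (I : {set T}) : I \subset divtuples a -> stable close I ->
  #|I|%:R * ln 2 ^+ k <= Lk R a.
Proof.
move=> IS Istable; set X := iter_leb k (fun l => (\1_(boxunion a) l : R)%:E).
have in_boxes (J : {set T}) : J \subset divtuples a ->
    iter_leb k (fun l => (\sum_(d <- enum J) 1 * (in_box (box_lo d) (box_hi d) l)%:R)%:E) =
    (#|J|%:R * ln 2 ^+ k)%:E.
  move=> JS; rewrite iter_leb_sum_boxes // => [|d i]; last exact: box_lo_le_hi.
  rewrite big_enum /= (eq_bigr (fun=> ln 2 ^+ k)) => [|d dJ]; first by rewrite sumr_const mulr_natl.
  by rewrite mul1r box_vol_divtuple // (fintype.subsetP JS).
(* The upper bound only ensures that X is finite, so that [fine] is harmless. *)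
have X_le : (X <= (#|divtuples a|%:R * ln 2 ^+ k)%:E)%E.
  rewrite -in_boxes //; apply: le_iter_leb => l; rewrite lee_fin indicE //.
  have [/set_mem/boxunionE [d dS dl]|_] := boolP (l \in boxunion a).
    by rewrite big_enum (bigD1 d) //= dl mulr1 lerDl sumr_ge0 // => d' _; rewrite mul1r.
  by rewrite sumr_ge0 // => d _; rewrite mul1r.
have X_ge : ((#|I|%:R * ln 2 ^+ k)%:E <= X)%E.
  rewrite -in_boxes //; apply: le_iter_leb => l; rewrite lee_fin.
    by rewrite sumr_ge0 // => d _; rewrite mul1r.
  rewrite indicE big_enum /=.
  have [[d dI dl]|no_box] := pselect (exists2 d, d \in I & in_box (box_lo d) (box_hi d) l).
    have -> : l \in boxunion a.
      by apply/mem_set/boxunionE; exists d => //; apply: (fintype.subsetP IS).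
    rewrite (bigD1 d) //= dl mulr1 big1 ?addr0 // => d' /andP[d'I d'd].
    have [d'l|] := boolP (in_box (box_lo d') (box_hi d') l); last by rewrite mulr0.
    have := Istable d d' dI d'I; rewrite eq_sym d'd => /(_ isT) /negP[].
    by apply: (close_of_in_box _ _ dl d'l); apply: (fintype.subsetP IS).
  by rewrite big1 // => d dI; case: (boolP (in_box _ _ l)) => [dl|]; [case: no_box; exists d | rewrite mulr0].
by rewrite /Lk -/X -lee_fin fineK // ge0_fin_numE ?(le_lt_trans X_le) ?ltry // iter_leb_ge0.
Qed.

Lemma sum_inv_nbhd_le_Lk :
  ln 2 ^+ k * \sum_(d in divtuples a) (#|nbhd close (divtuples a) d|%:R)^-1 <= Lk R a.
Proof.
have [I [IS Istable card_I]] := caro_wei close_sym close_refl R (divtuples a).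
apply: le_trans (Lk_ge_stable IS Istable); rewrite mulrC ler_wpM2r //.
by rewrite exprn_ge0 // ltW // ln2_gt0.
Qed.

End divisor_boxes.

Lemma big_tagged (R : nmodType) (I : Type) (J : I -> finType) (s : seq I)
    (A : forall i, {pred J i}) (F : forall i, J i -> R) :
  \sum_(i <- s) \sum_(j in A i) F i j =
  \sum_(u <- [seq Tagged J j | i <- s, j <- enum (A i)]) F (tag u) (tagged u).
Proof. by rewrite big_allpairs_dep; apply: eq_bigr => i _; rewrite big_enum. Qed.

Theorem lemma6p1 (R : realType) (k : nat) (P : R) (A : {fset (k.-tuple nat)}) :
  1 < P ->
  (forall a, a \in A -> forall i : 'I_k, (0 < tnth a i)%N) ->
  (\sum_(a <- A) (tau a)%:R / (prodA a)%:R)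
    <= (\sum_(a <- A) Wk P a / (prodA a)%:R) `^ (P^-1)
       * ((ln (2 : R) ^+ k)^-1 * \sum_(a <- A) Lk R a / (prodA a)%:R) `^ (1 - P^-1).
Proof.
move=> P1 _.
pose w (a : k.-tuple nat) : R := (prodA a)%:R^-1.
pose N a (d : {ffun 'I_k -> 'I_(prodA a).+1}) : R := #|nbhd (@close R k a) (divtuples a) d|%:R.
have tauE a : (tau a)%:R / (prodA a)%:R = \sum_(d in divtuples a) w a.
  by rewrite sumr_const mulr_natl.
have WkE a : Wk P a / (prodA a)%:R = \sum_(d in divtuples a) w a * N a d `^ (P - 1).
  by rewrite /Wk mulr_suml; apply: eq_bigr => d _; rewrite mulrC.
have LkE : \sum_(a <- A) \sum_(d in divtuples a) w a / N a d <=
    (ln 2 ^+ k)^-1 * \sum_(a <- A) Lk R a / (prodA a)%:R.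
  rewrite mulr_sumr; apply: ler_sum => a _.
  rewrite -mulr_sumr mulrC mulrA ler_wpM2r ?invr_ge0 // ler_pdivlMl ?exprn_gt0 ?ln2_gt0 //.
  exact: sum_inv_nbhd_le_Lk.
rewrite (eq_bigr _ (fun a _ => tauE a)) (eq_bigr _ (fun a _ => WkE a)) !big_tagged.
apply: le_trans (hoelder_sum_split (w := fun u => w (tag u)) (N := fun u => N (tag u) (tagged u)) P1 _ _) _.
- by move=> u; rewrite invr_ge0.
- move=> u /allpairsPdep[a [d [_ dS ->]]]; rewrite ltr0n /=.
  by apply: nbhd_gt0; [exact: close_refl | rewrite mem_enum in dS].
rewrite big_tagged in LkE.
rewrite ler_wpM2l ?powR_ge0 // ge0_ler_powR ?nnegrE ?subr_ge0 ?invf_le1 ?(ltW P1) //.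
- by rewrite (lt_trans ltr01).
- by apply: sumr_ge0 => u _; rewrite divr_ge0 ?invr_ge0.
- by apply: le_trans _ LkE; apply: sumr_ge0 => u _; rewrite divr_ge0 ?invr_ge0.
Qed.
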